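(* Let $(E_i)_{i\in I}$ be a family of sets and $\mathcal{U}$ a uniform ultrafilter on $I$. Then the set $L=\{x : \{i\in I : x\in E_i\}\in\mathcal{U}\}$ is a diagonal of the family $(E_i)_{i\in I}$.
   Context: An ultrafilter $\mathcal{U}$ on $I$ is uniform if every $X\in\mathcal{U}$ satisfies $|X|=|I|$. For sets $F,M$ put $I[F,M]=\{i\in I: F\cap M=F\cap E_i\}$. A set $D$ is a diagonal of $(E_i)_{i\in I}$ if for every finite set $F$ one has $|I[F,D]|=|I|$. *)

From HB Require Import structures.
From mathcomp Require Import all_boot.
From mathcomp Require Import boolp classical_sets functions cardinality filter.
Set Implicit Arguments.
Unset Strict Implicit.
Unset Printing Implicit Defensive.
Local Open Scope classical_set_scope.
Local Open Scope card_scope.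

Definition uniform_ultrafilter (I : Type) (U : set_system I) : Prop :=
  UltraFilter U /\ forall X : set I, U X -> (X #= [set: I]).

Definition index_set (I T : Type) (E : I -> set T) (F M : set T) : set I :=
  [set i | F `&` M = F `&` E i].

Definition is_diagonal (I T : Type) (E : I -> set T) (D : set T) : Prop :=
  forall F : set T, finite_set F -> (index_set E F D #= [set: I]).

From mathcomp Require Import all_boot.
From mathcomp Require Import boolp classical_sets functions cardinality filter.
From mathcomp Require Import finmap.

Set Implicit Arguments.
Unset Strict Implicit.
Unset Printing Implicit Defensive.
Local Open Scope classical_set_scope.
Local Open Scope card_scope.

(* For every finite F, the indices i for which E i agrees with L on F form a
   finite intersection of the sets {i | x \in L <-> x \in E i}, each of which
   is in U because U is an ultrafilter.  Hence this set of indices is in U, so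
   it has cardinality |I| by uniformity, and it is contained in I[F, L]. *)

Lemma ultra_iff_mem (I : Type) (U : set_system I) (A : set I) :
  UltraFilter U -> U [set i | U A <-> A i].
Proof.
move=> UF; have [UA|nUA] := pselect (U A).
  by apply: (filterS _ UA) => i Ai; split.
have [//|UnA] := in_ultra_setVsetC A UF.
by apply: (filterS _ UnA) => i nAi; split=> // /nAi.
Qed.

Lemma ultra_finite_agree (I T : Type) (E : I -> set T) (U : set_system I)
    (F : set T) :
  UltraFilter U -> finite_set F ->
  U [set i | forall x, F x -> (U [set j | E j x] <-> E i x)].
Proof.
move=> UF finF.
(* [{classic T}] gives [T] the choice structure needed to enumerate [F] as an
   [fset]. *)
have /finite_fsetP[X ->] := (finF : @finite_set {classic T} F).
have UX : U (\bigcap_(x in [set` X]) [set i | U [set j | E j x] <-> E i x]).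
  by apply: filter_bigI => x _; apply: ultra_iff_mem.
exact: UX.
Qed.

Lemma agree_sub_index_set (I T : Type) (E : I -> set T) (F D : set T) :
  [set i | forall x, F x -> (D x <-> E i x)] `<=` index_set E F D.
Proof.
move=> i agree; apply/seteqP.
by split=> x [Fx Dx]; split=> //; apply/(agree x Fx).
Qed.

Lemma supset_card_eqT (I : Type) (A B : set I) :
  A #= [set: I] -> A `<=` B -> B #= [set: I].
Proof.
move=> /card_eqPle[_ TleA] AB; apply/card_eqPle; split.
  exact: subset_card_le.
exact: card_le_trans TleA (subset_card_le AB).
Qed.

Theorem mainTheorem6 (I T : Type) (E : I -> set T) (U : set_system I) :
  uniform_ultrafilter U ->
  is_diagonal E [set x | U [set i | E i x]].
Proof.
move=> [UF unifU] F finF.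
apply: supset_card_eqT (unifU _ (ultra_finite_agree E UF finF)) _.
exact: agree_sub_index_set.
Qed.
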